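(* (Compatibility.) Let $E$ be an evident branch. For every type $\sigma$, every $n\ge 0$, all terms $s,t$ of type $\sigma$, and all terms $xs_1\dots s_n$, $xt_1\dots t_n$ of type $\sigma$ with $x$ a variable: (1) it is not the case that both $s\asymp_\sigma t$ and $[s]\not\parallel[t]$; (2) either $xs_1\dots s_n\asymp_\sigma xt_1\dots t_n$ or $[s_i]\not\parallel[t_i]$ for some $i\in\{1,\dots,n\}$.
   Context: Types: a countable set of base types including a distinguished $o$; other base types are sorts ($\alpha$). Types: base types and $\sigma\tau$ (functions from $\sigma$ to $\tau$; $\sigma\tau\mu=\sigma(\tau\mu)$). Countably many names with unique types, infinitely many per type. Terms: names; $st:\mu$ for $s:\tau\mu,t:\tau$; $\lambda x.t:\sigma\tau$ for a name $x:\sigma$, $t:\tau$. $\mathrm{Wff}_\sigma$: terms of type $\sigma$. Logical constants: $\neg:oo$, $=_\sigma:\sigma\sigma o$; other names are variables. Formulas: terms of type $o$; $s=_\sigma t$ is $(=_\sigma s)t$; $s\neq_\sigma t$ is $\neg(s=_\sigma t)$. A fixed type-preserving total normalization operator $[\cdot]$ on terms, with $s$ normal iff $[s]=s$, satisfies $[[s]]=[s]$, $[[s]t]=[st]$, and $[ys_1\dots s_n]=y[s_1]\dots[s_n]$ for any name $y$, $n\ge0$, with $ys_1\dots s_n$ of base type. A branch is a set of normal formulas. $E$ is evident if ($x$ ranges over variables): (DN) $\neg\neg s\in E\Rightarrow s\in E$; (BQ) $s=_ot\in E\Rightarrow$ ($s,t\in E$ or $\neg s,\neg t\in E$); (BE)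 $s\neq_ot\in E\Rightarrow$ ($s,\neg t\in E$ or $\neg s,t\in E$); (FQ) $s=_{\sigma\tau}t\in E\Rightarrow[su]=[tu]\in E$ for all normal $u:\sigma$; (FE) $s\neq_{\sigma\tau}t\in E\Rightarrow[sx]\neq[tx]\in E$ for some variable $x$; (Mat) $xs_1\dots s_n,\neg xt_1\dots t_n\in E\Rightarrow n\ge1$ and $s_i\neq t_i\in E$ for some $i$; (Dec) $xs_1\dots s_n\neq_\alpha xt_1\dots t_n\in E\Rightarrow n\ge 1$ and $s_i\neq t_i\in E$ for some $i$; (Con) $s=_\alpha t,u\neq_\alpha v\in E\Rightarrow$ ($s\neq u,t\neq u\in E$) or ($s\neq v,t\neq v\in E$). Notation: $s\not\parallel t$ means $E$ contains $s\neq t$ or $t\neq s$. Compatibility relations $\asymp_\sigma\subseteq\mathrm{Wff}_\sigma\times\mathrm{Wff}_\sigma$ are defined by induction on types: $s\asymp_o t$ iff $\{[s],\neg[t]\}\not\subseteq E$ and $\{\neg[s],[t]\}\not\subseteq E$; for a sort $\alpha$, $s\asymp_\alpha t$ iff not $[s]\not\parallel[t]$; $s\asymp_{\sigma\tau}t$ iff $su\asymp_\tau tv$ whenever $u\asymp_\sigma v$. *)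

From Stdlib Require Import List Arith.
Import ListNotations.

(* Base types: Base 0 is the distinguished type o; Base (S k) are sorts. *)
Inductive ty : Type :=
| Base : nat -> ty
| Arr : ty -> ty -> ty.

Definition o : ty := Base 0.

Definition is_sort (a : ty) : Prop := exists k, a = Base (S k).

(* Names, each with a unique type; infinitely many variables per type. *)
Inductive name : Type :=
| NNeg : name
| NEq  : ty -> name
| NVar : nat -> ty -> name.

Definition name_ty (x : name) : ty :=
  match x with
  | NNeg => Arr o o
  | NEq s => Arr s (Arr s o)
  | NVar _ s => s
  end.

Definition is_var (x : name) : Prop := exists i s, x = NVar i s.

Inductive tm : Type :=
| Nm  : name -> tm
| App : tm -> tm -> tm
| Lam : name -> tm -> tm.

Inductive has_ty : tm -> ty -> Prop :=
| ty_nm : forall x, has_ty (Nm x) (name_ty x)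
| ty_app : forall s t a b, has_ty s (Arr a b) -> has_ty t a -> has_ty (App s t) b
| ty_lam : forall x t b, has_ty t b -> has_ty (Lam x t) (Arr (name_ty x) b).

Definition spine (h : tm) (ss : list tm) : tm := fold_left App ss h.

Definition tneg (s : tm) : tm := App (Nm NNeg) s.
Definition teq (a : ty) (s t : tm) : tm := App (App (Nm (NEq a)) s) t.
Definition tneq (a : ty) (s t : tm) : tm := tneg (teq a s t).

Record normalizer : Type := {
  nf :> tm -> tm;
  nf_ty : forall s a, has_ty s a -> has_ty (nf s) a;
  nf_idem : forall s a, has_ty s a -> nf (nf s) = nf s;
  nf_app : forall s t b, has_ty (App s t) b -> nf (App (nf s) t) = nf (App s t);
  nf_head : forall (y : name) (ss : list tm) (k : nat),
      has_ty (spine (Nm y) ss) (Base k) ->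
      nf (spine (Nm y) ss) = spine (Nm y) (map nf ss)
}.

Definition normal (N : normalizer) (s : tm) : Prop := N s = s.

Definition branch (N : normalizer) (E : tm -> Prop) : Prop :=
  forall s, E s -> has_ty s o /\ normal N s.

Definition evident (N : normalizer) (E : tm -> Prop) : Prop :=
  (forall s, E (tneg (tneg s)) -> E s) /\
  (forall s t, E (teq o s t) -> (E s /\ E t) \/ (E (tneg s) /\ E (tneg t))) /\
  (* BE *)
  (forall s t, E (tneq o s t) -> (E s /\ E (tneg t)) \/ (E (tneg s) /\ E t)) /\
  (forall a b s t, E (teq (Arr a b) s t) ->
     forall u, has_ty u a -> normal N u ->
       E (teq b (N (App s u)) (N (App t u)))) /\
  (* FE *)
  (forall a b s t, E (tneq (Arr a b) s t) ->
     exists i, E (tneq b (N (App s (Nm (NVar i a)))) (N (App t (Nm (NVar i a)))))) /\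
  (* Mat *)
  (forall x ss ts, is_var x -> length ss = length ts ->
     E (spine (Nm x) ss) -> E (tneg (spine (Nm x) ts)) ->
     exists i a, i < length ss /\ has_ty (nth i ss (Nm x)) a /\
       E (tneq a (nth i ss (Nm x)) (nth i ts (Nm x)))) /\
  (* Dec *)
  (forall al x ss ts, is_sort al -> is_var x -> length ss = length ts ->
     E (tneq al (spine (Nm x) ss) (spine (Nm x) ts)) ->
     exists i a, i < length ss /\ has_ty (nth i ss (Nm x)) a /\
       E (tneq a (nth i ss (Nm x)) (nth i ts (Nm x)))) /\
  (forall al s t u v, is_sort al ->
     E (teq al s t) -> E (tneq al u v) ->
     (E (tneq al s u) /\ E (tneq al t u)) \/ (E (tneq al s v) /\ E (tneq al t v))).

Definition nparallel (E : tm -> Prop) (a : ty) (s t : tm) : Prop :=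
  E (tneq a s t) \/ E (tneq a t s).

Fixpoint compat (N : normalizer) (E : tm -> Prop) (a : ty) (s t : tm) : Prop :=
  match a with
  | Base 0 => ~ (E (N s) /\ E (tneg (N t))) /\ ~ (E (tneg (N s)) /\ E (N t))
  | Base (S k) => ~ nparallel E (Base (S k)) (N s) (N t)
  | Arr a1 b1 => forall u v, has_ty u a1 -> has_ty v a1 ->
      compat N E a1 u v -> compat N E b1 (App s u) (App t v)
  end.

(* Both parts are proved simultaneously by induction on the type.  At the
   base types, part (1) is the evidence condition (BE) (at [o]) or the very
   definition of compatibility (at sorts), and part (2) is (Mat) resp. (Dec)
   applied to the normal forms [x [s1] ... [sn]] of the two spines.  At a
   function type [sigma tau], part (2) for [x s1 ... sn] follows from part (2)
   at [tau] for the longer spines [x s1 ... sn u] and [x t1 ... tn v], whose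
   extra argument pair cannot clash by part (1) at [sigma]; part (1) follows
   from (FE), since a variable is compatible with itself by part (2) at
   [sigma] with [n = 0]. *)
From Stdlib Require Import List Arith Lia Classical.
Import ListNotations.

Lemma app_ty_inv s t b : has_ty (App s t) b -> exists a, has_ty s (Arr a b) /\ has_ty t a.
Proof. intro H; inversion H; subst; eauto. Qed.

Lemma has_ty_unique s a : has_ty s a -> forall b, has_ty s b -> a = b.
Proof.
  induction 1 as [x | s t a b _ IHs _ _ | x t b _ IHt]; intros c Hc.
  - now inversion Hc.
  - destruct (app_ty_inv _ _ _ Hc) as (a' & Hs' & _).
    specialize (IHs _ Hs'). congruence.
  - inversion Hc; subst. f_equal; auto.
Qed.

Lemma tneq_ty_inv b u v c : has_ty (tneq b u v) c -> has_ty u b /\ has_ty v b.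
Proof.
  unfold tneq, tneg, teq; intro H.
  destruct (app_ty_inv _ _ _ H) as (a1 & _ & H1).
  destruct (app_ty_inv _ _ _ H1) as (a2 & H2 & Hv).
  destruct (app_ty_inv _ _ _ H2) as (a3 & Heq & Hu).
  inversion Heq; subst; auto.
Qed.

Lemma spine_snoc h ss u : spine h (ss ++ [u]) = App (spine h ss) u.
Proof. unfold spine; rewrite fold_left_app; reflexivity. Qed.

Lemma spine_head_ty ss h a : has_ty (spine h ss) a -> exists c, has_ty h c.
Proof.
  revert h; induction ss as [|s ss IH]; simpl; intros h Hh; [eauto|].
  destruct (IH _ Hh) as [c Hc]. destruct (app_ty_inv _ _ _ Hc) as (? & ? & _). eauto.
Qed.

Lemma spine_arg_ty ss h a i d :
  has_ty (spine h ss) a -> i < length ss -> exists b, has_ty (nth i ss d) b.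
Proof.
  revert h i; induction ss as [|s ss IH]; simpl; intros h i Hh Hi; [lia|].
  destruct i as [|i].
  - destruct (spine_head_ty _ _ _ Hh) as [c Hc].
    destruct (app_ty_inv _ _ _ Hc) as (? & _ & Hs). eauto.
  - eapply IH; eauto. lia.
Qed.

Lemma var_ty i a : has_ty (Nm (NVar i a)) a.
Proof. exact (ty_nm (NVar i a)). Qed.

Lemma nth_map_lt {A B} (f : A -> B) l i d d' :
  i < length l -> nth i (map f l) d' = f (nth i l d).
Proof.
  intro Hi. rewrite (nth_indep _ d' (f d)) by (rewrite length_map; auto). apply map_nth.
Qed.

Definition args_clash (N : normalizer) (E : tm -> Prop) (x : name) (ss ts : list tm) :=
  exists i b, i < length ss /\ has_ty (nth i ss (Nm x)) b /\
    nparallel E b (N (nth i ss (Nm x))) (N (nth i ts (Nm x))).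

Section Compatibility.

Variables (N : normalizer) (E : tm -> Prop).
Hypothesis branch_E : branch N E.
Hypothesis evident_E : evident N E.

Definition compat_consistent (a : ty) :=
  forall s t, has_ty s a -> has_ty t a -> ~ (compat N E a s t /\ nparallel E a (N s) (N t)).

Definition compat_spine (a : ty) :=
  forall x ss ts, is_var x -> length ss = length ts ->
    has_ty (spine (Nm x) ss) a -> has_ty (spine (Nm x) ts) a ->
    compat N E a (spine (Nm x) ss) (spine (Nm x) ts) \/ args_clash N E x ss ts.

Lemma args_clash_of_nf x ss ts a i b :
  length ss = length ts -> has_ty (spine (Nm x) ss) a -> i < length ss ->
  nparallel E b (nth i (map N ss) (Nm x)) (nth i (map N ts) (Nm x)) ->
  args_clash N E x ss ts.
Proof.
  intros Hlen Hsp Hi Hpar.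
  rewrite (nth_map_lt N ss i (Nm x)), (nth_map_lt N ts i (Nm x)) in Hpar by lia.
  exists i, b; repeat split; auto.
  destruct (spine_arg_ty _ _ _ i (Nm x) Hsp Hi) as [c Hc].
  assert (Hnf : has_ty (N (nth i ss (Nm x))) b).
  { destruct Hpar as [H | H]; apply branch_E in H as [H _]; apply tneq_ty_inv in H; tauto. }
  rewrite (has_ty_unique _ _ Hnf _ (nf_ty N _ _ Hc)). exact Hc.
Qed.

Lemma compat_consistent_o : compat_consistent o.
Proof.
  destruct evident_E as (_ & _ & HBE & _).
  intros s t _ _ [[Hst Hts] [Hpar | Hpar]]; apply HBE in Hpar; tauto.
Qed.

Lemma compat_consistent_sort k : compat_consistent (Base (S k)).
Proof. intros s t _ _ [Hc Hpar]. exact (Hc Hpar). Qed.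

Lemma compat_consistent_arr a b :
  compat_spine a -> compat_consistent b -> compat_consistent (Arr a b).
Proof.
  destruct evident_E as (_ & _ & _ & _ & HFE & _).
  intros IHa IHb s t Hs Ht [Hc Hpar].
  assert (Hvar : forall i, compat N E a (Nm (NVar i a)) (Nm (NVar i a))).
  { intro i.
    destruct (IHa (NVar i a) [] [] ltac:(exists i, a; reflexivity) eq_refl
                (var_ty i a) (var_ty i a)) as [H | (j & _ & Hj & _)]; [exact H | simpl in Hj; lia]. }
  assert (Happ : forall i,
    nparallel E b (N (App s (Nm (NVar i a)))) (N (App t (Nm (NVar i a)))) -> False).
  { intros i Hi.
    apply (IHb _ _ (ty_app _ _ _ _ Hs (var_ty i a)) (ty_app _ _ _ _ Ht (var_ty i a))).
    split; [exact (Hc _ _ (var_ty i a) (var_ty i a) (Hvar i)) | exact Hi]. }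
  (* (FE) yields a disequation between [[[s] x]] and [[[t] x]], i.e. [[s x]] and [[t x]]. *)
  destruct Hpar as [Hpar | Hpar]; destruct (HFE _ _ _ _ Hpar) as [i Hi];
    rewrite (nf_app N s _ b (ty_app _ _ _ _ Hs (var_ty i a))),
            (nf_app N t _ b (ty_app _ _ _ _ Ht (var_ty i a))) in Hi;
    apply (Happ i); [left | right]; exact Hi.
Qed.

Lemma compat_spine_o : compat_spine o.
Proof.
  destruct evident_E as (_ & _ & _ & _ & _ & HMat & _).
  intros x ss ts Hx Hlen Hs Ht.
  destruct (classic (args_clash N E x ss ts)) as [Hcl | Hncl]; [now right | left].
  simpl; rewrite (nf_head N x ss 0 Hs), (nf_head N x ts 0 Ht).
  assert (Hlen' : length (map N ss) = length (map N ts)) by now rewrite !length_map.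
  split; intros [Hpos Hneg]; apply Hncl.
  - destruct (HMat x _ _ Hx Hlen' Hpos Hneg) as (i & b & Hi & _ & Hpar).
    rewrite length_map in Hi.
    exact (args_clash_of_nf x ss ts o i b Hlen Hs Hi (or_introl Hpar)).
  - destruct (HMat x _ _ Hx (eq_sym Hlen') Hneg Hpos) as (i & b & Hi & _ & Hpar).
    rewrite length_map in Hi.
    exact (args_clash_of_nf x ss ts o i b Hlen Hs ltac:(lia) (or_intror Hpar)).
Qed.

Lemma compat_spine_sort k : compat_spine (Base (S k)).
Proof.
  destruct evident_E as (_ & _ & _ & _ & _ & _ & HDec & _).
  intros x ss ts Hx Hlen Hs Ht.
  destruct (classic (args_clash N E x ss ts)) as [Hcl | Hncl]; [now right | left].
  simpl; rewrite (nf_head N x ss (S k) Hs), (nf_head N x ts (S k) Ht).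
  assert (Hsort : is_sort (Base (S k))) by now exists k.
  assert (Hlen' : length (map N ss) = length (map N ts)) by now rewrite !length_map.
  intros [Hpar | Hpar]; apply Hncl.
  - destruct (HDec _ x _ _ Hsort Hx Hlen' Hpar) as (i & b & Hi & _ & Hq).
    rewrite length_map in Hi.
    exact (args_clash_of_nf x ss ts _ i b Hlen Hs Hi (or_introl Hq)).
  - destruct (HDec _ x _ _ Hsort Hx (eq_sym Hlen') Hpar) as (i & b & Hi & _ & Hq).
    rewrite length_map in Hi.
    exact (args_clash_of_nf x ss ts _ i b Hlen Hs ltac:(lia) (or_intror Hq)).
Qed.

Lemma args_clash_snoc x ss ts u v a :
  length ss = length ts -> has_ty u a -> args_clash N E x (ss ++ [u]) (ts ++ [v]) ->
  args_clash N E x ss ts \/ nparallel E a (N u) (N v).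
Proof.
  intros Hlen Hu (i & b & Hi & Hb & Hpar).
  rewrite length_app in Hi; simpl in Hi.
  destruct (Nat.lt_ge_cases i (length ss)) as [Hlt | Hge].
  - left; exists i, b.
    rewrite !app_nth1 in Hb, Hpar by lia. rewrite (app_nth1 ts) in Hpar by lia. auto.
  - right. assert (i = length ss) by lia; subst i.
    rewrite app_nth2, Nat.sub_diag in Hb, Hpar by lia.
    rewrite app_nth2, Hlen, Nat.sub_diag in Hpar by lia.
    simpl in Hb, Hpar. now rewrite (has_ty_unique _ _ Hu _ Hb).
Qed.

Lemma compat_spine_arr a b :
  compat_consistent a -> compat_spine b -> compat_spine (Arr a b).
Proof.
  intros IHa IHb x ss ts Hx Hlen Hs Ht.
  destruct (classic (args_clash N E x ss ts)) as [Hcl | Hncl]; [now right | left].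
  intros u v Hu Hv Huv.
  assert (Hsu : has_ty (spine (Nm x) (ss ++ [u])) b)
    by (rewrite spine_snoc; econstructor; eauto).
  assert (Htv : has_ty (spine (Nm x) (ts ++ [v])) b)
    by (rewrite spine_snoc; econstructor; eauto).
  assert (Hlen' : length (ss ++ [u]) = length (ts ++ [v]))
    by (rewrite !length_app; simpl; lia).
  destruct (IHb x _ _ Hx Hlen' Hsu Htv) as [Hc | Hcl].
  - now rewrite !spine_snoc in Hc.
  - destruct (args_clash_snoc x ss ts u v a Hlen Hu Hcl) as [H | Hpar].
    + contradiction.
    + exfalso; exact (IHa u v Hu Hv (conj Huv Hpar)).
Qed.

Lemma compat_correct a : compat_consistent a /\ compat_spine a.
Proof.
  induction a as [[|k] | a [IHa1 IHa2] b [IHb1 IHb2]].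
  - split; [exact compat_consistent_o | exact compat_spine_o].
  - split; [apply compat_consistent_sort | apply compat_spine_sort].
  - split; [exact (compat_consistent_arr a b IHa2 IHb1)
           | exact (compat_spine_arr a b IHa1 IHb2)].
Qed.

End Compatibility.

Theorem lemma6p5 (N : normalizer) (E : tm -> Prop) :
  branch N E -> evident N E ->
  forall a : ty,
    (forall s t, has_ty s a -> has_ty t a ->
       ~ (compat N E a s t /\ nparallel E a (N s) (N t))) /\
    (forall (x : name) (ss ts : list tm),
       is_var x -> length ss = length ts ->
       has_ty (spine (Nm x) ss) a -> has_ty (spine (Nm x) ts) a ->
       compat N E a (spine (Nm x) ss) (spine (Nm x) ts) \/
       exists i b, i < length ss /\ has_ty (nth i ss (Nm x)) b /\
         nparallel E b (N (nth i ss (Nm x))) (N (nth i ts (Nm x)))).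
Proof.
  intros HB HE a. exact (compat_correct N E HB HE a).
Qed.
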